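(* Let $w$ be a metric on $V$, $T$ a minimum spanning tree of $G_w$, and $T'$ a subtree of $T$. Let $e=(u,v)$ be a pair with $u\in V(T')$ and $v\notin V(T')$. Then $\mathsf{adv}(\{e\},T')\le \mathsf{adv}^*(T')$.
   Context: $w$ is a metric on a finite set $V$, $G_w$ the complete graph on $V$ with edge weights $w$, and $w(E')=\sum_{e\in E'}w(e)$ for a set of pairs $E'$. For a pair $e=(u,v)$, $P^T_e$ is the $u$–$v$ path in $T$; an edge $f\in E(T)$ is covered by $e$ iff $f\in E(P^T_e)$; $\mathsf{cov}(E')$ is the set of edges of $T$ covered by some pair of $E'$, and for a subtree $T'$, $\mathsf{cov}(E',T')=\mathsf{cov}(E')\cap E(T')$ and $\mathsf{adv}(E',T')=w(\mathsf{cov}(E',T'))-w(E')$. A vertex $x$ of $T'$ is a special vertex of $T'$ iff $\deg_{T'}(x)\neq 2$. The optimal special cover advantage $\mathsf{adv}^*(T')$ is the maximum of $\mathsf{adv}(E',T')$ over all sets $E'$ of pairs each having at least one endpoint that is a special vertex of $T'$ (the empty set is allowed, so $\mathsf{adv}^*(T')\ge 0$). *)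

From HB Require Import structures.
From mathcomp Require Import all_boot all_order all_algebra.
From mathcomp Require Import boolp.
Set Implicit Arguments. Unset Strict Implicit. Unset Printing Implicit Defensive.
Import Order.TTheory GRing.Theory Num.Theory.
Local Open Scope ring_scope.

Section Defs.
Variables (R : realFieldType) (V : finType).

Definition metric (w : V -> V -> R) : Prop :=
  [/\ forall x y, w x y = 0 <-> x = y,
      forall x y, w x y = w y x &
      forall x y z, w x z <= w x y + w y z].

(* Edges / pairs are unordered pairs {x,y}, encoded as 2-element sets. *)
Definition is_pair (f : {set V}) : bool := #|f| == 2%N.

(* weight of an unordered pair {x,y}: equals w x y for a symmetric w
   with w x x = 0 (half the sum over ordered pairs of its elements). *)
Definition wE (w : V -> V -> R) (f : {set V}) : R :=
  (\sum_(x in f) \sum_(y in f) w x y) / 2%:R.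

Definition wset (w : V -> V -> R) (E : {set {set V}}) : R :=
  \sum_(f in E) wE w f.

Definition adj (E : {set {set V}}) : rel V := fun a b => [set a; b] \in E.

Definition has_cycle (E : {set {set V}}) : Prop :=
  exists (x : V) (p : seq V),
    [/\ uniq (x :: p), (2 <= size p)%N, path (adj E) x p & adj E (last x p) x].

Definition spanning_tree (T : {set {set V}}) : Prop :=
  [/\ forall f, f \in T -> is_pair f,
      forall x y, connect (adj T) x y &
      ~ has_cycle T].

Definition mst (w : V -> V -> R) (T : {set {set V}}) : Prop :=
  spanning_tree T /\ forall T2, spanning_tree T2 -> wset w T <= wset w T2.

Definition subtree (T : {set {set V}}) (VT' : {set V}) (ET' : {set {set V}}) : Prop :=
  [/\ VT' != set0, ET' \subset T,
      forall f, f \in ET' -> f \subset VT' &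
      forall x y, x \in VT' -> y \in VT' -> connect (adj ET') x y].

Definition tpath (T : {set {set V}}) (x y : V) (p : seq V) : Prop :=
  [/\ path (adj T) x p, last x p = y & uniq (x :: p)].

Definition pedges (x : V) (p : seq V) : seq {set V} :=
  [seq [set a.1; a.2] | a <- zip (x :: p) p].

Definition covers (T : {set {set V}}) (e f : {set V}) : Prop :=
  exists (x y : V) (p : seq V),
    [/\ e = [set x; y], tpath T x y p & f \in pedges x p].

Definition cov (T : {set {set V}}) (E : {set {set V}}) (ET' : {set {set V}})
  : {set {set V}} :=
  [set f in ET' | `[< exists e, e \in E /\ covers T e f >]].

Definition adv (w : V -> V -> R) (T : {set {set V}}) (E : {set {set V}})
  (ET' : {set {set V}}) : R :=
  wset w (cov T E ET') - wset w E.

Definition deg (ET' : {set {set V}}) (x : V) : nat := #|[set f in ET' | x \in f]|.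

Definition special (VT' : {set V}) (ET' : {set {set V}}) (x : V) : bool :=
  (x \in VT') && (deg ET' x != 2%N).

Definition special_pairs (VT' : {set V}) (ET' : {set {set V}}) (E : {set {set V}})
  : bool :=
  [forall e in E, is_pair e && [exists x in e, special VT' ET' x]].

(* adv^*(T') : maximum of adv(E', T') over admissible E' (E' = set0 is
   admissible, so the default 0 of the max is harmless) *)
Definition advstar (w : V -> V -> R) (T : {set {set V}}) (VT' : {set V})
  (ET' : {set {set V}}) : R :=
  \big[Order.max/0]_(E : {set {set V}} | special_pairs VT' ET' E) adv w T E ET'.

End Defs.

From HB Require Import structures.
From mathcomp Require Import all_boot all_order all_algebra.
From mathcomp Require Import boolp.
From mathcomp Require Import lra.
Import Order.TTheory GRing.Theory Num.Theory.
Local Open Scope ring_scope.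

Set Implicit Arguments. Unset Strict Implicit. Unset Printing Implicit Defensive.

(* Starting at u, walk inside T' away from v, passing only through vertices of
   degree 2 in T'.  In a tree such a walk never revisits a vertex, so it stops
   at a special vertex a, and the tree path from a to v is the walk followed by
   the tree path from u to v.  Hence {a,v} covers the T'-edges covered by {u,v}
   together with the edges of the walk, whose weight is at least
   w(a,u) >= w(a,v) - w(u,v); so adv({a,v},T') >= adv({u,v},T'), while {a,v}
   is admissible for adv^*(T'). *)

Section PathEdges.
Variable V : finType.
Implicit Types (E : {set {set V}}) (f : {set V}) (x y z : V) (p q : seq V).

Lemma adj_sym E x y : adj E x y = adj E y x.
Proof. by rewrite /adj setUC. Qed.

Lemma path_adj_rev E x p :
  path (adj E) (last x p) (rev (belast x p)) = path (adj E) x p.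
Proof. by rewrite rev_path; apply: eq_path => a b; rewrite adj_sym. Qed.

Lemma last_rev_belast x p : last (last x p) (rev (belast x p)) = x.
Proof. by case/lastP: p => [|p y] //=; rewrite belast_rcons rev_cons last_rcons. Qed.

Lemma pedges_cons x y p : pedges x (y :: p) = [set x; y] :: pedges y p.
Proof. by []. Qed.

Lemma pedges_cat x p q : pedges x (p ++ q) = pedges x p ++ pedges (last x p) q.
Proof. by elim: p x => [|y p IHp] x //; rewrite cat_cons !pedges_cons IHp. Qed.

Lemma pedges_rcons x p y : pedges x (rcons p y) = rcons (pedges x p) [set last x p; y].
Proof. by rewrite -cats1 pedges_cat cats1. Qed.

Lemma mem_pedges_rev f x p :
  (f \in pedges (last x p) (rev (belast x p))) = (f \in pedges x p).
Proof.
elim: p x => [|y p IHp] x //=.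
rewrite rev_cons pedges_rcons last_rev_belast mem_rcons !inE IHp.
by rewrite setUC.
Qed.

Lemma pedges_path E x p f : path (adj E) x p -> f \in pedges x p -> f \in E.
Proof.
elim: p x => [|y p IHp] x //= /andP[Exy /IHp{}IHp].
by rewrite pedges_cons inE => /orP[/eqP->|/IHp].
Qed.

Lemma mem_pedges_endpoint x p f z : f \in pedges x p -> z \in f -> z \in x :: p.
Proof.
elim: p x => [|y p IHp] x //; rewrite pedges_cons inE => /orP[/eqP->|/IHp{}IHp].
  by rewrite !inE => /orP[] ->; rewrite ?orbT.
by move=> /IHp zyp; rewrite inE zyp orbT.
Qed.

Lemma card_pedges x p f : uniq (x :: p) -> f \in pedges x p -> #|f| = 2%N.
Proof.
elim: p x => [|y p IHp] x //= /andP[xNyp Uyp]; rewrite pedges_cons inE.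
case/orP=> [/eqP->|/IHp->//]; rewrite cards2.
by case: eqP xNyp => // ->; rewrite mem_head.
Qed.

Lemma pedges_uniq x p : uniq (x :: p) -> uniq (pedges x p).
Proof.
elim: p x => [|y p IHp] x //= /andP[xNyp Uyp]; rewrite IHp // andbT.
by apply: contra xNyp => /mem_pedges_endpoint; apply; rewrite set21.
Qed.

Lemma pedges_disjoint x p q : uniq (x :: p ++ q) ->
  [disjoint pedges x p & pedges (last x p) q].
Proof.
move=> U; apply/pred0P => f /=; apply/negbTE/negP => /andP[fp fq].
suff: f \subset [set last x p].
  move/subset_leq_card; rewrite (card_pedges _ fp) ?cards1 //.
  by move: U; rewrite -cat_cons cat_uniq => /andP[].
apply/subsetP => z zf; rewrite inE.
have zxp := mem_pedges_endpoint fp zf; have zq := mem_pedges_endpoint fq zf.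
move: U zxp zq; rewrite -cat_cons lastI cat_rcons cat_uniq => /and3P[_ /hasPn Hq _].
rewrite mem_rcons !inE => /orP[//|zb] /orP[//|zq].
by have := Hq z; rewrite inE zq orbT zb => /(_ isT).
Qed.

End PathEdges.

Section Acyclic.
Variable V : finType.
Implicit Types (E : {set {set V}}) (x y z : V) (p q s t : seq V).

Lemma two_paths_has_cycle E x z s t :
  path (adj E) x (rcons s z) -> path (adj E) x (rcons t z) ->
  uniq (x :: rcons s z) -> uniq (x :: rcons t z) -> ~~ has (mem t) s ->
  s ++ t != [::] -> has_cycle E.
Proof.
move=> Ps Pt Us Ut Dst nst; exists x, (s ++ z :: rev t).
have := Pt; rewrite -path_adj_rev belast_rcons last_rcons rev_cons rcons_path.
case/andP=> Ptr Ptx.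
move: Ps; rewrite rcons_path => /andP[Ps Psz].
split.
- move: Us Ut Dst; rewrite -cat_rcons !cons_uniq !rcons_uniq mem_cat !mem_rcons mem_rev.
  rewrite cat_uniq rcons_uniq rev_uniq has_rev has_sym has_rcons !inE !negb_or.
  by case/and3P=> /andP[-> ->] -> -> /and3P[/andP[_ ->] -> ->] ->.
- by move: nst; rewrite size_cat /= size_rev addnS ltnS -size_cat -size_eq0 lt0n.
- by rewrite cat_path Ps /= Psz.
- by rewrite last_cat.
Qed.

Lemma notin_path_adj E x y s : ~ has_cycle E -> path (adj E) x s ->
  uniq (x :: s) -> adj E x y -> y != head x s -> y \notin s.
Proof.
move=> nc Ps Us Exy yNh; apply/negP => ys; apply: nc.
move: Ps Us yNh; case/splitPr: ys => s1 s2; rewrite -cat_rcons => Ps Us yNh.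
apply: (@two_paths_has_cycle E x y s1 [::]).
- by move: Ps; rewrite cat_path => /andP[].
- by rewrite /= Exy.
- by move: Us; rewrite -cat_cons cat_uniq => /andP[].
- by move: Us; rewrite /= mem_cat mem_rcons !inE !negb_or andbT => /andP[/andP[/andP[]]].
- by apply/hasPn.
- by case: s1 {Ps Us} yNh; rewrite //= eqxx.
Qed.

Lemma tpath_behead E x y a p : tpath E x y (a :: p) -> tpath E a y p.
Proof. by rewrite /tpath /= => -[/andP[_ ->] -> /andP[_ ->]]. Qed.

Lemma tpath_uniq E x y p q : ~ has_cycle E -> tpath E x y p -> tpath E x y q -> p = q.
Proof.
move=> nc; elim: p x q => [|a p IHp] x [|b q] //; rewrite {1 2}/tpath.
- by case=> _ /= -> _ [_ /= Lq /andP[]]; rewrite -Lq mem_last.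
- by case=> _ /= Lp /andP[+ _] [_ /= Lq]; rewrite Lq -Lp mem_last.
move=> Tp Tq; have [ab|ab] := eqVneq a b.
  by rewrite -ab in Tq *; rewrite (IHp a q (tpath_behead Tp) (tpath_behead Tq)).
case: Tp Tq => Pp Lp Up [Pq Lq Uq]; apply: False_ind; apply: nc.
have hp : has (mem (b :: q)) (a :: p).
  by apply/hasP; exists y; [rewrite -Lp | rewrite -Lq]; rewrite /= mem_last.
have {}ab : head x (a :: p) != head x (b :: q) by [].
(* z is the first vertex of a :: p on b :: q; the two prefixes ending at z form a cycle. *)
move: ab Pp Up; case: (split_find_nth y hp) => z s p2 zbq sNbq ab Pp Up.
move: ab Pq Uq sNbq; case: (splitPr zbq) => t q2; rewrite -!cat_rcons => ab Pq Uq sNtq.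
apply: (@two_paths_has_cycle E x z s t).
- by move: Pp; rewrite cat_path => /andP[].
- by move: Pq; rewrite cat_path => /andP[].
- by move: Up; rewrite -cat_cons cat_uniq => /andP[].
- by move: Uq; rewrite -cat_cons cat_uniq => /andP[].
- by apply: contra sNtq; apply: sub_has => c /= ct; rewrite mem_cat mem_rcons inE ct orbT.
- by case: s t {Pp Up Pq Uq sNtq} ab => [|? ?] [|? ?]; rewrite //= eqxx.
Qed.

End Acyclic.

Lemma tpath_rev (V : finType) (E : {set {set V}}) x y p :
  tpath E x y p -> tpath E y x (rev (belast x p)).
Proof.
case=> Pp <- Up; split; first by rewrite path_adj_rev.
  exact: last_rev_belast.
by rewrite -rev_rcons -lastI rev_uniq.
Qed.

Lemma set2_eq (V : finType) (x y x' y' : V) :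
  [set x; y] = [set x'; y'] -> (x' = x /\ y' = y) \/ (x' = y /\ y' = x).
Proof.
move=> exy.
have : x' \in [set x; y] by rewrite exy set21.
have : y' \in [set x; y] by rewrite exy set22.
have : x \in [set x'; y'] by rewrite -exy set21.
have : y \in [set x'; y'] by rewrite -exy set22.
by rewrite !inE => /orP[]/eqP? /orP[]/eqP? /orP[]/eqP? /orP[]/eqP?; subst; auto.
Qed.

Lemma cov_pair (V : finType) (T ET' : {set {set V}}) x y p :
  ~ has_cycle T -> tpath T x y p ->
  cov T [set [set x; y]] ET' = [set f in ET' | f \in pedges x p].
Proof.
move=> nc Tp; apply/setP => f; rewrite !inE; apply: andb_id2l => _.
apply/asboolP/idP => [[e [/set1P-> [x' [y' [p' [exy Tp' fp']]]]]]|fp].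
  case: (set2_eq exy) => -[ex' ey']; rewrite {}ex' {}ey' in Tp' fp'.
    by rewrite (tpath_uniq nc Tp Tp').
  have Lp' : last y p' = x by case: Tp'.
  by rewrite (tpath_uniq nc Tp (tpath_rev Tp')) -{1}Lp' mem_pedges_rev.
by exists [set x; y]; split; [rewrite inE | exists x, y, p].
Qed.

Section Metric.
Variables (R : realFieldType) (V : finType) (w : V -> V -> R).
Hypothesis wM : metric w.

Lemma metric_refl x : w x x = 0.
Proof. by case: wM => w0 _ _; apply/w0. Qed.

Lemma wE_pair x y : wE w [set x; y] = w x y.
Proof.
case: wM => _ wC _; rewrite /wE; have [<-|xy] := eqVneq x y.
  by rewrite setUid !big_set1 metric_refl mul0r.
have xNy : x \notin [set y] by rewrite inE.
rewrite !big_setU1 //= !big_set1 big_setU1 //= !big_set1 !metric_refl.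
by rewrite add0r addr0 (wC y x); lra.
Qed.

Lemma metric_le_pedges x p : w x (last x p) <= \sum_(f <- pedges x p) wE w f.
Proof.
case: wM => _ _ wT; elim: p x => [|y p IHp] x /=; first by rewrite metric_refl big_nil.
by rewrite pedges_cons big_cons wE_pair (le_trans (wT _ y _)) // lerD2l.
Qed.

Lemma metric_le_wset_pedges x p :
  uniq (x :: p) -> w x (last x p) <= wset w [set f | f \in pedges x p].
Proof.
move=> Up; rewrite /wset (eq_bigl (mem (pedges x p))) => [|f]; last by rewrite inE.
by rewrite -big_uniq ?pedges_uniq ?metric_le_pedges.
Qed.

End Metric.

Lemma pair_other (V : finType) (f : {set V}) a :
  is_pair f -> a \in f -> exists2 y, y != a & f = [set a; y].
Proof.
case/cards2P=> c [d [cd ->]]; rewrite !inE => /orP[]/eqP->.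
  by exists d; rewrite // eq_sym.
by exists c; rewrite // setUC.
Qed.

Lemma adj_neq (V : finType) (E : {set {set V}}) x y :
  {in E, forall f, is_pair f} -> adj E x y -> x != y.
Proof. by move=> Epair /Epair; rewrite /is_pair cards2; case: (x != y). Qed.

Section SubtreeWalk.
Variables (V : finType) (T : {set {set V}}) (VT' : {set V}) (ET' : {set {set V}}).
Variables (u : V) (P : seq V).
Hypotheses (Tpair : {in T, forall f, is_pair f}) (Tacyclic : ~ has_cycle T).
Hypotheses (ET'T : ET' \subset T) (ET'VT' : {in ET', forall f : {set V}, f \subset VT'}).
Hypothesis PuP : path (adj T) u P.

Definition subtree_walk a Q :=
  [/\ a \in VT', path (adj ET') a Q, last a Q = u & uniq (a :: Q ++ P)].

Lemma adj_subtree x y : adj ET' x y -> adj T x y.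
Proof. exact: (subsetP ET'T). Qed.

Lemma subtree_walk_path a Q : subtree_walk a Q -> path (adj T) a (Q ++ P).
Proof. by case=> _ PQ LQ _; rewrite cat_path LQ PuP (sub_path adj_subtree PQ). Qed.

Lemma nonspecial_neighbors a : a \in VT' -> ~~ special VT' ET' a ->
  exists y1 y2, [/\ y1 != y2, adj ET' a y1 & adj ET' a y2].
Proof.
rewrite /special => -> /= /negPn /cards2P [f1 [f2 [f12 Ea]]].
have : f1 \in [set f in ET' | a \in f] by rewrite Ea set21.
have : f2 \in [set f in ET' | a \in f] by rewrite Ea set22.
rewrite !inE => /andP[Ef2 af2] /andP[Ef1 af1].
have [y1 _ f1E] := pair_other (Tpair (subsetP ET'T _ Ef1)) af1.
have [y2 _ f2E] := pair_other (Tpair (subsetP ET'T _ Ef2)) af2.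
exists y1, y2; rewrite /adj -f1E -f2E Ef1 Ef2; split=> //.
by apply: contraNneq f12 => y12; rewrite f1E f2E y12.
Qed.

Lemma subtree_walk_step a Q : subtree_walk a Q -> ~~ special VT' ET' a ->
  exists y, subtree_walk y (a :: Q).
Proof.
move=> W; have [Va PQ LQ UQ] := W.
case/(nonspecial_neighbors Va) => y1 [y2 [y12 ay1 ay2]].
have [y [ay yNh]] : exists y, adj ET' a y /\ y != head a (Q ++ P).
  have [y1h|] := eqVneq y1 (head a (Q ++ P)); last by exists y1.
  by exists y2; rewrite -y1h eq_sym.
have yNQP : y \notin Q ++ P.
  exact: notin_path_adj Tacyclic (subtree_walk_path W) UQ (adj_subtree ay) yNh.
have ay' : a != y := adj_neq Tpair (adj_subtree ay).
exists y; split=> //=.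
- by apply: (subsetP (ET'VT' ay)); rewrite set22.
- by rewrite PQ adj_sym ay.
- by rewrite inE negb_or eq_sym ay' yNQP.
Qed.

Lemma subtree_walk_size a Q : subtree_walk a Q -> (size Q < #|V|)%N.
Proof.
case=> _ _ _ U; have := max_card (mem (a :: Q ++ P)).
by rewrite (card_uniqP U) /= size_cat; apply: leq_trans; rewrite ltnS leq_addr.
Qed.

Lemma exists_special_walk a Q : subtree_walk a Q ->
  exists a' Q', special VT' ET' a' /\ subtree_walk a' Q'.
Proof.
have [n] : exists n, (#|V| - size Q <= n)%N by eexists.
elim: n a Q => [|n IHn] a Q Qn W.
  by move: (subtree_walk_size W); rewrite -subn_gt0 lt0n -leqn0 Qn.
have [Sa|/(subtree_walk_step W) [y Wy]] := boolP (special VT' ET' a).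
  by exists a, Q.
by apply: IHn Wy; rewrite /= subnS -subn1 leq_subLR add1n.
Qed.

End SubtreeWalk.

Lemma wset1 (R : realFieldType) (V : finType) (w : V -> V -> R) (e : {set V}) :
  wset w [set e] = wE w e.
Proof. exact: big_set1. Qed.

Lemma connect_tpath (V : finType) (E : {set {set V}}) x y :
  connect (adj E) x y -> exists p, tpath E x y p.
Proof.
by case/connectP=> p0 /shortenP[p Pp Up _] ->; exists p.
Qed.

Lemma wset_cov_pair_cat (R : realFieldType) (V : finType) (w : V -> V -> R)
    (T ET' : {set {set V}}) a u v Q P :
  ~ has_cycle T -> ET' \subset T -> tpath T u v P ->
  path (adj ET') a Q -> last a Q = u -> uniq (a :: Q ++ P) ->
  wset w (cov T [set [set a; v]] ET') =
  wset w [set f | f \in pedges a Q] + wset w (cov T [set [set u; v]] ET').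
Proof.
move=> nc ET'T [PuP LP UP] PQ LQ UQP.
have TaQP : tpath T a v (Q ++ P).
  split; rewrite ?last_cat ?LQ //.
  by rewrite cat_path LQ PuP (sub_path (fun x y => subsetP ET'T _) PQ).
rewrite (cov_pair _ nc TaQP) (cov_pair _ nc (And3 PuP LP UP)).
have -> : [set f in ET' | f \in pedges a (Q ++ P)] =
          [set f | f \in pedges a Q] :|: [set f in ET' | f \in pedges u P].
  apply/setP=> f; rewrite !inE pedges_cat mem_cat LQ andb_orr.
  by case fQ: (f \in pedges a Q); rewrite /= ?(pedges_path PQ fQ) ?andbF.
rewrite /wset -bigU; first by apply: eq_bigl => f; rewrite !inE.
have := pedges_disjoint UQP; rewrite LQ => D.
apply: (disjointWl _ (disjointWr _ D)); apply/subsetP => f; rewrite inE //.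
by case/andP.
Qed.

Theorem mainTheorem2 (R : realFieldType) (V : finType) (w : V -> V -> R)
  (T : {set {set V}}) (VT' : {set V}) (ET' : {set {set V}}) (u v : V) :
  metric w -> mst w T -> subtree T VT' ET' ->
  u \in VT' -> v \notin VT' ->
  adv w T [set [set u; v]] ET' <= advstar w T VT' ET'.
Proof.
move=> wM [[Tpair Tconn Tacyclic] _] [_ ET'T ET'VT' _] uVT' vNVT'.
have [P TP] := connect_tpath (Tconn u v); have [PuP _ UP] := TP.
have W0 : subtree_walk VT' ET' u P u [::] by [].
have [a [Q [Sa [aVT' PQ LQ UQP]]]] :=
  exists_special_walk Tpair Tacyclic ET'T ET'VT' PuP W0.
have av : a != v by apply: contraNneq vNVT' => <-.
have adm : special_pairs VT' ET' [set [set a; v]].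
  apply/forall_inP => e /set1P ->; rewrite /is_pair cards2 av.
  by apply/existsP; exists a; rewrite set21.
apply: le_trans (le_bigmax_cond _ (fun E => adv w T E ET') adm).
rewrite /adv !wset1 !wE_pair // (wset_cov_pair_cat w Tacyclic ET'T TP PQ LQ UQP).
have UQ : uniq (a :: Q) by move: UQP; rewrite -cat_cons cat_uniq => /andP[].
have := metric_le_wset_pedges wM UQ.
case: wM => _ _ /(_ a u v); rewrite LQ; lra.
Qed.
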